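(* Let $f$ be a nonzero polynomial and write its multiset of reproducible zeros as $$R(f)=\{\underbrace{\beta_1,\dots,\beta_1}_{r_1},\underbrace{\beta_2,\dots,\beta_2}_{r_2},\dots,\underbrace{\beta_n,\dots,\beta_n}_{r_n}\}$$ with $\beta_1,\dots,\beta_n$ distinct. Then $$[f]=\Big[\prod_{\beta\in R(f)}(z-\beta)\Big]=\Big(\operatorname{span}\big\{k_{\beta_j}^{(\ell)}:0\le\ell\le r_j-1,\ 1\le j\le n\big\}\Big)^{\perp},$$ where the product is taken over $R(f)$ with multiplicity (and equals $1$ if $R(f)$ is empty).
   Context: Standing assumptions: $\Omega\subset\mathbb C$ is a domain with $0\in\Omega$, $\mathcal H$ is a Hilbert space of analytic functions on $\Omega$ with bounded point evaluations at points of $\Omega$, the shift $(Sf)(z)=zf(z)$ is bounded on $\mathcal H$, and the polynomials $\mathcal P$ are dense in $\mathcal H$. For $g\in\mathcal H$, $[g]$ is the closure in $\mathcal H$ of $\operatorname{span}\{z^kg:k\ge0\}$. A point $\beta\in\mathbb C$ is reproducible of order $m\ge0$ if $p\mapsto p^{(m)}(\beta)$ on $\mathcal P$ extends to a bounded linear functional on $\mathcal H$; $k_\beta^{(m)}\in\mathcal H$ is the element representing this extension, $\langle g,k_\beta^{(m)}\rangle=g^{(m)}(\beta)$. $\beta$ is a reproducible point if reproducible of order $0$; reproducibility of order $m$ implies that of all orders $j\le m$; $\operatorname{ro}(\beta)\in\{0,1,\dots\}\cup\{\infty\}$ is the supremum of orders of reproducibility. For a nonzero polynomial $p$, $R(p)$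 is the multiset of reproducible zeros: each reproducible point $\beta$ at which $p$ has a zero of order $m\ge1$ is listed $\min\{m,\operatorname{ro}(\beta)+1\}$ times; non-reproducible zeros are omitted. *)

(* Complex numbers are  R[i]  (mathcomp-real-closed)
   for an arbitrary  R : realType  (a model of the real numbers); the topology on
   R[i] is the canonical normed topology of the numFieldType  R[i]^o . *)
From HB Require Import structures.
From mathcomp Require Import all_boot all_order all_algebra.
From mathcomp Require Import complex.
From mathcomp Require Import all_classical all_reals topology normedtype derive.
Set Implicit Arguments. Unset Strict Implicit. Unset Printing Implicit Defensive.
Import Order.TTheory GRing.Theory Num.Theory.
Import numFieldNormedType.Exports numFieldTopology.Exports.
Local Open Scope classical_set_scope.
Local Open Scope ring_scope.

Section Defs.
Variable R : realType.
Local Notation C := (R[i]).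

(** The Hilbert space H is an abstract C-vector space  V  with an inner product  ip ;
  [ev v] is the analytic function on  Om  that the vector  v  is.  Norms are only
  used squared:  ||v||^2 = ip v v . *)

Definition domain0 (Om : set C^o) : Prop := open Om /\ connected Om /\ Om 0.

Definition is_elt (V : lmodType C) (ev : V -> C -> C) (Om : set C^o)
    (v : V) (g : C -> C) : Prop :=
  forall z, Om z -> ev v z = g z.

Definition is_poly_elt (V : lmodType C) (ev : V -> C -> C) (Om : set C^o)
    (v : V) (p : {poly C}) : Prop :=
  is_elt ev Om v (fun z => p.[z]).

Definition standing_assumptions (Om : set C^o) (V : lmodType C)
    (ip : V -> V -> C) (ev : V -> C -> C) (S : V -> V) : Prop :=
      domain0 Om /\
      (forall a u v w, ip (a *: u + v) w = a * ip u w + ip v w) /\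
      (forall u v, ip u v = (ip v u)^*) /\
      (forall v, 0 <= ip v v) /\
      (forall v, ip v v = 0 -> v = 0) /\
      (forall u : nat -> V,
          (forall e : C, 0 < e -> exists N, forall m n, (N <= m)%N -> (N <= n)%N ->
               ip (u m - u n) (u m - u n) < e) ->
          exists v, forall e : C, 0 < e -> exists N, forall n, (N <= n)%N ->
               ip (u n - v) (u n - v) < e) /\
      (forall a u v z, Om z -> ev (a *: u + v) z = a * ev u z + ev v z) /\
      (forall u v, (forall z, Om z -> ev u z = ev v z) -> u = v) /\
      (* the elements of H are analytic (complex differentiable) on Ω *)
      (forall v z, Om z -> derivable (ev v : C^o -> C^o) z 1) /\
        (forall z, Om z -> exists c : C, forall v, `|ev v z| ^+ 2 <= c * ip v v) /\
        (forall v, is_elt ev Om (S v) (fun z => z * ev v z)) /\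
        (exists c : C, forall v, ip (S v) (S v) <= c * ip v v) /\
        (forall p : {poly C}, exists v, is_poly_elt ev Om v p) /\
        (forall v (e : C), 0 < e -> exists p w, is_poly_elt ev Om w p /\
             ip (v - w) (v - w) < e).

Section Space.
Variables (Om : set C^o) (V : lmodType C) (ip : V -> V -> C) (ev : V -> C -> C)
  (S : V -> V).

Definition lspan (A : set V) : set V :=
  [set x | exists s : seq (C * V), (forall cv, cv \in s -> A cv.2) /\
                                   x = \sum_(cv <- s) cv.1 *: cv.2].

Definition hclosure (A : set V) : set V :=
  [set x | forall e : C, 0 < e -> exists y, A y /\ ip (x - y) (x - y) < e].

Definition orth (A : set V) : set V := [set x | forall y, A y -> ip x y = 0].

(** [g] = closure of span { z^k g : k >= 0 };  z^k g = S^k g. *)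
Definition cyc (g : V) : set V :=
  hclosure (lspan [set iter k S g | k in [set: nat]]).

(** β is reproducible of order m: p |-> p^(m)(β) is bounded on the polynomials
    (in the norm of H), i.e. extends to a bounded linear functional on H. *)
Definition reproducible (beta : C) (m : nat) : Prop :=
  exists c : C, forall (p : {poly C}) (v : V), is_poly_elt ev Om v p ->
    `|(p^`(m)).[beta]| ^+ 2 <= c * ip v v.

(** k represents the (bounded extension of the) functional p |-> p^(m)(β):
    <g, k> = g^(m)(β); on the dense set of polynomials this reads
    <p, k> = p^(m)(β), which determines k and the extension uniquely. *)
Definition is_kernel (beta : C) (m : nat) (k : V) : Prop :=
  forall (p : {poly C}) (v : V), is_poly_elt ev Om v p -> ip v k = (p^`(m)).[beta].

(** ro(β) >= n  (ro(β) = supremum of the orders of reproducibility). *)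
Definition ro_ge (beta : C) (n : nat) : Prop := exists j, (n <= j)%N /\ reproducible beta j.

(** Number of times β is listed in R(f): if β is reproducible and f has a zero of
    order m >= 1 at β, this is min{m, ro(β)+1} = #{ l < m | ro(β) >= l };
    otherwise 0. *)
Definition rmult (f : {poly C}) (beta : C) : nat :=
  if `[< reproducible beta 0 >] then
    #|[set l : 'I_(mup beta f) | `[< ro_ge beta l >] ]|
  else 0.

End Space.
End Defs.

From HB Require Import structures.
From mathcomp Require Import all_boot all_order all_algebra.
From mathcomp Require Import complex.
From mathcomp Require Import all_classical all_reals topology normedtype derive.
From mathcomp Require Import ring lra.
Import Order.TTheory GRing.Theory Num.Theory.
Import numFieldNormedType.Exports numFieldTopology.Exports.
Local Open Scope classical_set_scope.
Local Open Scope complex_scope.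
Local Open Scope ring_scope.

Set Implicit Arguments. Unset Strict Implicit. Unset Printing Implicit Defensive.

(** Write [pvec p] for the element of H which the polynomial p is, and K(g) for
  the set of kernels k_z^(l) with z reproducible of order l and l < mult_z g.
  The heart of the proof is the identity, valid for every polynomial g <> 0,
        [g] = (span K(g))^perp                               (cyc_poly_orth).
  "⊆": (g u)^(l)(z) = 0 when l < mult_z g, and <., k> is continuous.
  "⊇": for x ⊥ K(g) we show, by induction on the degree, that x is a limit of
  multiples d u of every divisor d of g.  Constants are handled by the density
  of the polynomials, and d is extended to d (z - b), with j = mult_b d, by
  - [near_mults_reproducible_root] if b is reproducible of order j: x ⊥ k_b^(j)
    lets one correct an approximant d u by the multiple u(b) d;
  - [near_peel] otherwise: p |-> p^(j)(b) is unbounded, and Taylor expanding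
    a polynomial p with a huge j-th coefficient at b shows that (z - b)^j a is
    a limit of multiples of (z - b)^(j+1) a.
  Theorem 7 follows since K(f) and K(prod (z - b)^(r_b)) both equal the set of
  kernels of the statement, as r_b = #{l < mult_b f | b reproducible of order l}. *)

Lemma card_asbool (P : nat -> Prop) m :
  #|[set i : 'I_m | `[< P i >] ]| = count (fun i => `[< P i >]) (iota 0 m).
Proof.
have -> : #|[set i : 'I_m | `[< P i >] ]| = #|[set i : 'I_m | `[< P i >] ]%SET|.
  apply: eq_card => i; rewrite inE /=.
  by apply/idP/idP => [|h]; rewrite in_setE //=; exact/asboolP.
by rewrite -sum1dep_card -(big_mkord (fun i => `[< P i >]) (fun _ => 1%N)) sum1_count
  /index_iota subn0.
Qed.

(** A downward closed predicate P holds on an initial segment, so that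
    l < #{i < m | P i} exactly when l < m and P l. *)
Lemma lt_count_downward (P : nat -> bool) m :
  (forall a b, (a <= b)%N -> P b -> P a) ->
  forall l, (l < count P (iota 0 m))%N <-> (l < m)%N /\ P l.
Proof.
move=> Pdown; elim: m => [|m IH] l; first by split => // -[].
have -> : iota 0 m.+1 = iota 0 m ++ [:: m] by rewrite -addn1 iotaD.
rewrite count_cat /= addn0.
case Pm: (P m).
  have -> : count P (iota 0 m) = m.
    apply/eqP; rewrite eqn_leq; apply/andP; split.
      by have := count_size P (iota 0 m); rewrite size_iota.
    case: m IH Pm => [|m'] IH Pm //.
    by apply/(IH m').2; split => //; exact: (Pdown m' m'.+1 (leqnSn _) Pm).
  rewrite addn1 ltnS; split => [lm|[] //]; split => //; exact: Pdown lm Pm.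
rewrite addn0 IH ltnS; split => -[lm Pl]; split => //; first exact: ltnW.
by move: lm; rewrite leq_eqVlt => /orP[/eqP el|] //; rewrite el Pm in Pl.
Qed.

(** * Taylor coefficients of polynomials *)
Section Taylor.
Variable F : fieldType.
Implicit Types (p q r a u d : {poly F}) (z : F).

Definition taylor_coef z p (i : nat) : F := (p \Po ('X + z%:P))`_i.

Definition taylor_poly z (j : nat) p : {poly F} :=
  \sum_(i < j) taylor_coef z p i *: ('X - z%:P) ^+ i.

Lemma derivn_comp_XsubC q z i :
  (q \Po ('X - z%:P))^`(i) = q^`(i) \Po ('X - z%:P).
Proof.
elim: i => [|i IH]; first by rewrite !derivn0.
by rewrite !derivnS IH deriv_comp derivB derivX derivC subr0 mulr1.
Qed.

Lemma derivn_taylor_coef p z i : p^`(i).[z] = taylor_coef z p i *+ i`!.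
Proof.
have := derivn_comp_XsubC (p \Po ('X + z%:P)) z i; rewrite comp_polyXaddC_K => ->.
by rewrite horner_comp hornerXsubC subrr horner_coef0 coef_derivn addn0 ffactnn.
Qed.

Lemma taylor_coef0 p z : taylor_coef z p 0 = p.[z].
Proof. by rewrite /taylor_coef -horner_coef0 horner_comp hornerD hornerX hornerC add0r. Qed.

Lemma taylor_coef_XsubCX j p z l :
  taylor_coef z (('X - z%:P) ^+ j * p) l =
  if (l < j)%N then 0 else taylor_coef z p (l - j).
Proof.
have shiftX : ('X - z%:P) \Po ('X + z%:P) = 'X.
  by rewrite comp_polyB comp_polyX comp_polyC addrK.
by rewrite /taylor_coef comp_polyM (rmorphXn (comp_poly ('X + z%:P))) /= shiftX coefXnM.
Qed.

Lemma taylor_coef_XsubC p z l :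
  taylor_coef z (('X - z%:P) * p) l.+1 = taylor_coef z p l.
Proof. by have := taylor_coef_XsubCX 1 p z l.+1; rewrite expr1 /= subn1. Qed.

Lemma comp_poly_widen (t q : {poly F}) n : (size t <= n)%N ->
  t \Po q = \sum_(i < n) t`_i *: q ^+ i.
Proof.
move=> hs; rewrite comp_polyE (big_ord_widen n (fun i => t`_i *: q ^+ i) hs).
rewrite big_mkcond /=; apply: eq_bigr => i _; case: ifP => // /negbT.
by rewrite -leqNgt => /(nth_default 0) ->; rewrite scale0r.
Qed.

Lemma taylor_split p z j : exists r,
  p = taylor_poly z j p + ('X - z%:P) ^+ j * r /\ r.[z] = taylor_coef z p j.
Proof.
set q := p \Po ('X + z%:P).
exists (drop_poly j q \Po ('X - z%:P)); split; last first.
  by rewrite horner_comp hornerXsubC subrr horner_coef0 coef_drop_poly.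
rewrite -{1}(comp_polyXaddC_K p z) -/q -{1}(poly_take_drop j q).
rewrite comp_polyD comp_polyM (rmorphXn (comp_poly ('X - z%:P))) /= comp_polyX.
rewrite [_ * ('X - _) ^+ _]mulrC; congr (_ + _).
rewrite (comp_poly_widen _ (size_take_poly j q)); apply: eq_bigr => i _.
by rewrite coef_take_poly ltn_ord.
Qed.

Lemma mup_split d z : d != 0 ->
  exists a, d = ('X - z%:P) ^+ (mup z d) * a /\ a.[z] != 0.
Proof.
move=> d0; set j := mup z d.
have hj : ('X - z%:P) ^+ j %| d by rewrite -mup_geq.
exists (d %/ ('X - z%:P) ^+ j); split; first by rewrite mulrC divpK.
apply/negP => ra.
have : ('X - z%:P) ^+ j.+1 %| d.
  rewrite -(divpK hj) exprSr [X in _ %| X]mulrC; apply: dvdp_mul => //.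
  by rewrite dvdp_XsubCl.
by rewrite -mup_geq // ltnn.
Qed.

(** Subtracting the value at z makes a polynomial a multiple of X - z. *)
Lemma mul_root_quotient d u z :
  d * ('X - z%:P) * ((u - (u.[z])%:P) %/ ('X - z%:P)) = d * u - u.[z] *: d.
Proof.
have hw : (u - (u.[z])%:P) %/ ('X - z%:P) * ('X - z%:P) = u - (u.[z])%:P.
  by apply: divpK; rewrite dvdp_XsubCl rootE hornerD hornerN hornerC subrr.
by rewrite -mulrA (mulrC ('X - z%:P)) hw mulrBr (mulrC d (u.[z])%:P) mul_polyC.
Qed.

Lemma peel_identity z j a r (tau : F) : r.[z] = tau -> tau != 0 ->
  ('X - z%:P) ^+ j * a -
  ('X - z%:P) ^+ j.+1 * a * ((1 - tau^-1 *: r) %/ ('X - z%:P)) =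
  tau^-1 *: (a * (('X - z%:P) ^+ j * r)).
Proof.
move=> rz tau0.
have hu : (1 - tau^-1 *: r) %/ ('X - z%:P) * ('X - z%:P) = 1 - tau^-1 *: r.
  apply: divpK; rewrite dvdp_XsubCl rootE hornerD hornerN hornerZ rz hornerC.
  by rewrite mulVf // subrr.
set w := _ %/ _ in hu *.
have -> : ('X - z%:P) ^+ j.+1 * a * w = ('X - z%:P) ^+ j * a * (w * ('X - z%:P)).
  by rewrite exprSr; ring.
by rewrite hu -!mul_polyC; ring.
Qed.

Lemma prod_XsubCX_neq0 (s : seq F) (e : F -> nat) :
  \prod_(b <- s) ('X - b%:P) ^+ e b != 0.
Proof.
rewrite prodf_seq_neq0; apply/allP => b _ /=.
by rewrite expf_neq0 // polyXsubC_eq0.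
Qed.

Lemma mup_prod_XsubCX (s : seq F) (e : F -> nat) z : uniq s ->
  mup z (\prod_(b <- s) ('X - b%:P) ^+ e b) = if z \in s then e z else 0%N.
Proof.
elim: s => [|b s IH] /=; first by rewrite big_nil mupNroot // root1.
move=> /andP[bs us]; rewrite big_cons mupM ?prod_XsubCX_neq0 ?expf_neq0 ?polyXsubC_eq0 //.
rewrite mup_XsubCX IH // in_cons.
by case: (eqVneq z b) => [->|zb] /=; [rewrite (negbTE bs) addn0|rewrite add0n].
Qed.

End Taylor.
Section Modulus.
Variable R : realType.
Local Notation C := (R[i]).

Definition abs2 (z : C) : R := complex.Re (z * z^*).

Lemma abs2E z : (abs2 z)%:C = z * z^*.
Proof. by rewrite /abs2 -normCK RRe_real // realX // normr_real. Qed.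

Lemma abs2_ge0 z : 0 <= abs2 z.
Proof. by rewrite -ler0c abs2E -normCK exprn_ge0. Qed.

Lemma abs2M x y : abs2 (x * y) = abs2 x * abs2 y.
Proof. by apply: complexI; rewrite rmorphM /= !abs2E rmorphM /=; ring. Qed.

Lemma abs2_eq0 z : abs2 z = 0 -> z = 0.
Proof.
move=> h; have : (abs2 z)%:C = 0 by rewrite h.
by rewrite abs2E -normCK => /eqP; rewrite expf_eq0 /= normr_eq0 => /eqP.
Qed.

Lemma abs2_gt0 z : z != 0 -> 0 < abs2 z.
Proof.
move=> z0; rewrite lt_def abs2_ge0 andbT; apply/eqP => h; move: z0.
by rewrite (abs2_eq0 h) eqxx.
Qed.

Lemma Creal (r : R) : r%:C \is Num.real.
Proof. by apply/complex_realP; exists r. Qed.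

Lemma abs2_real (r : R) : abs2 r%:C = r ^+ 2.
Proof. by apply: complexI; rewrite abs2E conj_Creal ?Creal // rmorphM. Qed.

Lemma abs2V x : abs2 x^-1 = (abs2 x)^-1.
Proof. by apply: complexI; rewrite fmorphV /= !abs2E fmorphV /= invfM. Qed.

Lemma abs2_mulrn (x : C) n : abs2 (x *+ n) = abs2 x * (n%:R) ^+ 2.
Proof. by rewrite -[x *+ n]mulr_natr abs2M -(rmorph_nat (real_complex R)) abs2_real. Qed.

Lemma abs2_le_mulrn (x : C) n : (0 < n)%N -> abs2 x <= abs2 (x *+ n).
Proof.
move=> n0; rewrite abs2_mulrn -{1}(mulr1 (abs2 x)); apply: ler_wpM2l; first exact: abs2_ge0.
by rewrite expr_ge1 // ler1n.
Qed.

Lemma Re_mulr_real (c : C) (r : R) : complex.Re (c * r%:C) = complex.Re c * r.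
Proof. by case: c => a b /=; rewrite mulr0 subr0. Qed.

Lemma real_bound (c : C) (y r : R) : 0 <= r -> y%:C <= c * r%:C ->
  y <= Num.max (complex.Re c) 0 * r.
Proof.
move=> r0; rewrite lecE => /andP[_]; rewrite Re_mulr_real /= => h.
by apply: (le_trans h); apply: ler_wpM2r => //; rewrite le_max lexx.
Qed.

Lemma Cpos_Re (e : C) : 0 < e -> 0 < complex.Re e /\ e = (complex.Re e)%:C.
Proof.
move=> e0; split; first by move: e0; rewrite ltcE => /andP[_].
by rewrite RRe_real // gtr0_real.
Qed.

End Modulus.

(** * Geometry of a complex inner product space *)
Section InnerProduct.
Variable R : realType.
Local Notation C := (R[i]).
Variables (V : lmodType C) (ip : V -> V -> C).
Hypothesis ipL : forall a u v w, ip (a *: u + v) w = a * ip u w + ip v w.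
Hypothesis ipC : forall u v, ip u v = (ip v u)^*.
Hypothesis ip_ge0 : forall v, 0 <= ip v v.
Hypothesis ip_eq0 : forall v, ip v v = 0 -> v = 0.

Definition norm2 (v : V) : R := complex.Re (ip v v).

Lemma ipvv v : ip v v = (norm2 v)%:C.
Proof. by rewrite /norm2 RRe_real // ger0_real. Qed.

Lemma norm2_ge0 v : 0 <= norm2 v.
Proof. by rewrite -ler0c -ipvv. Qed.

Lemma norm2_eq0 v : norm2 v = 0 -> v = 0.
Proof. by move=> h; apply: ip_eq0; rewrite ipvv h. Qed.

Lemma ip0l w : ip 0 w = 0.
Proof.
have := ipL 1 0 0 w; rewrite scaler0 addr0 mul1r => /eqP.
by rewrite -subr_eq0 opprD addrA subrr add0r oppr_eq0 => /eqP.
Qed.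
Lemma ipDl u v w : ip (u + v) w = ip u w + ip v w.
Proof. by have := ipL 1 u v w; rewrite scale1r mul1r. Qed.
Lemma ipZl a u w : ip (a *: u) w = a * ip u w.
Proof. by have := ipL a u 0 w; rewrite addr0 ip0l addr0. Qed.
Lemma ipNl u w : ip (- u) w = - ip u w.
Proof. by rewrite -scaleN1r ipZl mulN1r. Qed.
Lemma ipBl u v w : ip (u - v) w = ip u w - ip v w.
Proof. by rewrite ipDl ipNl. Qed.
Lemma ip0r w : ip w 0 = 0.
Proof. by rewrite ipC ip0l rmorph0. Qed.
Lemma ipDr u v w : ip w (u + v) = ip w u + ip w v.
Proof. by rewrite ipC ipDl rmorphD /= -!ipC. Qed.
Lemma ipZr a u w : ip w (a *: u) = a^* * ip w u.
Proof. by rewrite ipC ipZl rmorphM /= -ipC. Qed.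
Lemma ipNr u w : ip w (- u) = - ip w u.
Proof. by rewrite ipC ipNl rmorphN /= -ipC. Qed.

Lemma norm2_0 : norm2 0 = 0.
Proof. by rewrite /norm2 ip0l. Qed.

Lemma norm2Z a v : norm2 (a *: v) = abs2 a * norm2 v.
Proof. by apply: complexI; rewrite rmorphM /= -ipvv abs2E ipZl ipZr -ipvv; ring. Qed.

Lemma norm2N v : norm2 (- v) = norm2 v.
Proof.
by rewrite -scaleN1r norm2Z -(rmorphN1 (real_complex R)) abs2_real sqrrN expr1n mul1r.
Qed.

Lemma norm2B u v : norm2 (u - v) = norm2 (v - u).
Proof. by rewrite -norm2N opprB. Qed.

(** Consequence of the parallelogram law: ||u + v||^2 <= 2||u||^2 + 2||v||^2. *)
Lemma norm2D_le u v : norm2 (u + v) <= 2 * norm2 u + 2 * norm2 v.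
Proof.
have par : norm2 (u + v) + norm2 (u - v) = 2 * norm2 u + 2 * norm2 v.
  apply: complexI; rewrite !rmorphD !rmorphM /= -!ipvv.
  rewrite ?ipDl ?ipNl ?ipDr ?ipNr; ring.
by rewrite -par lerDl norm2_ge0.
Qed.

Lemma norm2B_le u v : norm2 (u - v) <= 2 * norm2 u + 2 * norm2 v.
Proof. by rewrite -(norm2N v); exact: norm2D_le. Qed.

Lemma norm2_sum_le n (F : nat -> V) :
  norm2 (\sum_(i < n) F i) <= 2 ^+ n * \sum_(i < n) norm2 (F i).
Proof.
elim: n => [|n IH]; first by rewrite !big_ord0 norm2_0 mulr0.
rewrite !big_ord_recr /=; apply: (le_trans (norm2D_le _ _)).
have s0 : 0 <= \sum_(i < n) norm2 (F i) by apply: sumr_ge0 => i _; exact: norm2_ge0.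
have e1 : 1 <= (2 : R) ^+ n by apply: exprn_ege1; lra.
have := norm2_ge0 (F n); rewrite exprS; nra.
Qed.

(** Cauchy-Schwarz: |<u, v>|^2 <= ||u||^2 ||v||^2, by expanding ||u - t v||^2 >= 0
    for t = <u, v> / ||v||^2. *)
Lemma cauchy_schwarz u v : abs2 (ip u v) <= norm2 u * norm2 v.
Proof.
have [v0|vn0] := eqVneq (norm2 v) 0.
  by rewrite (norm2_eq0 v0) ip0r /abs2 mul0r /= norm2_0 mulr0.
set a := ip u v; set N := norm2 v.
have Np : 0 < N by rewrite lt_def vn0 norm2_ge0.
pose t := a / N%:C.
have h := norm2_ge0 (u - t *: v).
suff : (norm2 (u - t *: v))%:C = (norm2 u - abs2 a / N)%:C.
  by move/complexI=> e; rewrite e subr_ge0 ler_pdivrMr // in h.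
have NC : N%:C != 0 by rewrite eq_complex /= negb_and vn0.
rewrite rmorphB rmorphM fmorphV /= abs2E -!ipvv ?ipDl ?ipNl ?ipZl ?ipDr ?ipNr ?ipZr.
rewrite (ipC v u) -/a (ipvv v) -/N /t rmorphM /= fmorphV /= (conj_Creal (Creal N)).
by field.
Qed.

(** If <w, y> = 0 then |<x, y>|^2 <= ||x - w||^2 ||y||^2: the functional <., y>
    is small near its zeros. *)
Lemma orth_dist_bound x w y : ip w y = 0 -> abs2 (ip x y) <= norm2 (x - w) * norm2 y.
Proof. by move=> wy; rewrite -(subr0 (ip x y)) -wy -ipBl; exact: cauchy_schwarz. Qed.


(** * Polynomials as vectors of the function space H *)
Section FunctionSpace.
Variables (Om : set C^o) (ev : V -> C -> C) (S : V -> V).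
Hypothesis evL : forall a u v z, Om z -> ev (a *: u + v) z = a * ev u z + ev v z.
Hypothesis ev_inj : forall u v, (forall z, Om z -> ev u z = ev v z) -> u = v.
Hypothesis S_elt : forall v, is_elt ev Om (S v) (fun z => z * ev v z).
Hypothesis S_bnd : exists c : C, forall v, ip (S v) (S v) <= c * ip v v.
Hypothesis poly_ex : forall p : {poly C}, exists v, is_poly_elt ev Om v p.
Hypothesis poly_dense : forall v (e : C), 0 < e ->
  exists p w, is_poly_elt ev Om w p /\ ip (v - w) (v - w) < e.

Definition pvec (p : {poly C}) : V := projT1 (cid (poly_ex p)).

Lemma pvecP p : is_poly_elt ev Om (pvec p) p.
Proof. exact: (projT2 (cid (poly_ex p))). Qed.

Lemma pvec_uniq v p : is_poly_elt ev Om v p -> v = pvec p.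
Proof. by move=> H; apply: ev_inj => z Hz; rewrite (H z Hz) (pvecP p Hz). Qed.

Lemma ev0 z : Om z -> ev 0 z = 0.
Proof.
move=> Hz; have := evL 1 0 0 Hz; rewrite scaler0 addr0 mul1r => /eqP.
by rewrite -subr_eq0 opprD addrA subrr add0r oppr_eq0 => /eqP.
Qed.

Lemma pvecL a p q : pvec (a *: p + q) = a *: pvec p + pvec q.
Proof.
by symmetry; apply: pvec_uniq => z Hz; rewrite evL // !pvecP // hornerD hornerZ.
Qed.
Lemma pvec0 : pvec 0 = 0.
Proof. by symmetry; apply: pvec_uniq => z Hz; rewrite ev0 // horner0. Qed.
Lemma pvecD p q : pvec (p + q) = pvec p + pvec q.
Proof. by have := pvecL 1 p q; rewrite !scale1r. Qed.
Lemma pvecZ a p : pvec (a *: p) = a *: pvec p.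
Proof. by have := pvecL a p 0; rewrite !addr0 pvec0 addr0. Qed.
Lemma pvecN p : pvec (- p) = - pvec p.
Proof. by rewrite -(scaleN1r p) pvecZ scaleN1r. Qed.
Lemma pvecB p q : pvec (p - q) = pvec p - pvec q.
Proof. by rewrite pvecD pvecN. Qed.
Lemma pvec_sum (I : Type) (r : seq I) (F : I -> {poly C}) :
  pvec (\sum_(i <- r) F i) = \sum_(i <- r) pvec (F i).
Proof.
elim: r => [|x r IH]; first by rewrite !big_nil pvec0.
by rewrite !big_cons pvecD IH.
Qed.

Lemma pvecS p : S (pvec p) = pvec ('X * p).
Proof.
apply: pvec_uniq => z Hz; rewrite S_elt // pvecP //.
by rewrite [X in _ = X.[_]]mulrC hornerMX mulrC.
Qed.

Lemma pvec_iter n p : iter n S (pvec p) = pvec ('X^n * p).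
Proof.
elim: n => [|n IH]; first by rewrite expr0 mul1r.
by rewrite iterS IH pvecS mulrA -exprS.
Qed.

Lemma shift_bounded : exists cS : R, 0 <= cS /\ forall v, norm2 (S v) <= cS * norm2 v.
Proof.
case: S_bnd => c Hc; exists (Num.max (complex.Re c) 0); split.
  by rewrite le_max lexx orbT.
by move=> v; apply: real_bound; [exact: norm2_ge0|rewrite -!ipvv].
Qed.

(** Multiplication by a fixed polynomial h is bounded on the polynomials, being
    a polynomial in the bounded shift. *)
Lemma mul_bounded (h : {poly C}) :
  exists M : R, 0 <= M /\ forall p, norm2 (pvec (h * p)) <= M * norm2 (pvec p).
Proof.
case: shift_bounded => cS [cS0 HS].
elim/poly_ind: h => [|h c [M [M0 HM]]].
  by exists 0; split => // p; rewrite mul0r pvec0 norm2_0 mul0r.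
exists (2 * M * cS + 2 * abs2 c); split.
  by have := abs2_ge0 c; nra.
move=> p; have -> : (h * 'X + c%:P) * p = h * ('X * p) + c *: p.
  by rewrite mulrDl mul_polyC mulrA.
rewrite pvecD pvecZ; apply: (le_trans (norm2D_le _ _)); rewrite norm2Z.
have h1 := HM ('X * p); rewrite -pvecS in h1.
have h2 : M * norm2 (S (pvec p)) <= M * (cS * norm2 (pvec p)) by apply: ler_wpM2l.
have := norm2_ge0 (pvec p); have := abs2_ge0 c; nra.
Qed.

(** * Reproducible points *)

Local Notation repr := (reproducible Om ip ev).

Lemma repr_bound b m : repr b m ->
  exists c : R, 0 <= c /\ forall p, abs2 (p^`(m).[b]) <= c * norm2 (pvec p).
Proof.
case=> c Hc; exists (Num.max (complex.Re c) 0); split; first by rewrite le_max lexx orbT.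
move=> p; apply: real_bound; first exact: norm2_ge0.
by rewrite abs2E -normCK -ipvv; exact: Hc (pvecP p).
Qed.

Lemma bound_repr b m (c : R) :
  (forall p, abs2 (p^`(m).[b]) <= c * norm2 (pvec p)) -> repr b m.
Proof.
move=> H; exists c%:C => p v Hv; rewrite (pvec_uniq Hv) normCK -abs2E ipvv.
by rewrite -rmorphM lecR.
Qed.

(** Reproducibility of order m+1 implies that of order m, because
    ((X - b) p)^(m+1)(b) = (m+1) p^(m)(b) and multiplication by X - b is bounded. *)
Lemma repr_pred b m : repr b m.+1 -> repr b m.
Proof.
case/repr_bound=> c [c0 Hc]; case: (mul_bounded ('X - b%:P)) => M [M0 HM].
apply: (@bound_repr _ _ (c * M)) => p.
have e : (('X - b%:P) * p)^`(m.+1).[b] = p^`(m).[b] *+ m.+1.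
  by rewrite !derivn_taylor_coef taylor_coef_XsubC factS mulnC mulrnA.
apply: (le_trans (abs2_le_mulrn _ (ltn0Sn m))); rewrite -e.
by apply: (le_trans (Hc _)); rewrite -mulrA; apply: ler_wpM2l.
Qed.

Lemma repr_le b j l : repr b j -> (l <= j)%N -> repr b l.
Proof.
move=> h hl; move: h; rewrite -(subnK hl); elim: (j - l)%N => [|n IH] h //.
by apply: IH; apply: repr_pred; rewrite addSn in h.
Qed.

Lemma ro_geE b l : ro_ge Om ip ev b l <-> repr b l.
Proof. by split => [[j [hl hr]]|h]; [exact: repr_le hr hl|exists l]. Qed.

Lemma repr_taylor_bound z j : (forall i, (i < j)%N -> repr z i) ->
  exists c : R, 0 <= c /\
    forall i p, (i < j)%N -> abs2 (taylor_coef z p i) <= c * norm2 (pvec p).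
Proof.
elim: j => [|j IH] H; first by exists 0; split.
case: IH => [i hi|c [c0 Hc]]; first by apply: H; exact: ltnW.
case: (repr_bound (H j (ltnSn j))) => c' [c'0 Hc'].
exists (Num.max c c'); split; first by rewrite le_max c0.
move=> i p; rewrite ltnS leq_eqVlt => /orP[/eqP ->|hi].
  apply: (le_trans (y := abs2 (p^`(j).[z]))).
    by rewrite derivn_taylor_coef; apply: abs2_le_mulrn; exact: fact_gt0.
  apply: (le_trans (Hc' p)).
  by apply: ler_wpM2r; [exact: norm2_ge0|rewrite le_max lexx orbT].
apply: (le_trans (Hc i p hi)).
by apply: ler_wpM2r; [exact: norm2_ge0|rewrite le_max lexx].
Qed.

Lemma taylor_remainder_bound z j (a : {poly C}) :
  (forall i, (i < j)%N -> repr z i) ->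
  exists K : R, 0 <= K /\
    forall p, norm2 (pvec (a * (p - taylor_poly z j p))) <= K * norm2 (pvec p).
Proof.
move=> hrepr; case: (mul_bounded a) => Ca [Ca0 HCa].
case: (repr_taylor_bound hrepr) => c [c0 Hc].
set NX := \sum_(i < j) norm2 (pvec (('X - z%:P) ^+ i)).
have NX0 : 0 <= NX by apply: sumr_ge0 => i _; exact: norm2_ge0.
set M := 2 ^+ j * (c * NX).
have M0 : 0 <= M by apply: mulr_ge0; [exact: exprn_ge0|exact: mulr_ge0].
have HT : forall p, norm2 (pvec (taylor_poly z j p)) <= M * norm2 (pvec p).
  move=> p; rewrite pvec_sum; under eq_bigr do rewrite pvecZ.
  apply: (le_trans (norm2_sum_le j (fun i => taylor_coef z p i *: pvec (('X - z%:P) ^+ i)))).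
  rewrite -!mulrA; apply: ler_wpM2l; first exact: exprn_ge0.
  rewrite mulr_suml mulr_sumr; apply: ler_sum => i _.
  rewrite norm2Z (mulrC (norm2 (pvec _)) (norm2 (pvec p))) mulrA.
  apply: ler_wpM2r; first exact: norm2_ge0.
  exact: Hc.
exists (Ca * (2 + 2 * M)); split; first by nra.
move=> p; apply: (le_trans (HCa _)); rewrite pvecB -mulrA; apply: ler_wpM2l => //.
apply: (le_trans (norm2B_le _ _)); have := HT p; have := norm2_ge0 (pvec p); nra.
Qed.

Lemma taylor_coef_unbounded z j : ~ repr z j ->
  forall c : R, exists p, c * norm2 (pvec p) < abs2 (taylor_coef z p j).
Proof.
move=> hn c; apply/not_existsP => hp; apply: hn.
apply: (@bound_repr _ _ (c * (j`!%:R) ^+ 2)) => p.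
rewrite derivn_taylor_coef abs2_mulrn mulrAC; apply: ler_wpM2r.
  by apply: exprn_ge0; rewrite ler0n.
by have /negP := hp p; rewrite -leNgt.
Qed.

(** * Approximation by multiples *)

Definition near_mults (x : V) (c : {poly C}) :=
  forall e : R, 0 < e -> exists u, norm2 (x - pvec (c * u)) < e.

Lemma near_mults_mul b c d :
  near_mults (pvec b) c -> near_mults (pvec (b * d)) (c * d).
Proof.
move=> H e e0; case: (mul_bounded d) => M [M0 HM].
have M1 : 0 < M + 1 by lra.
case: (H (e / (M + 1))) => [|u Hu]; first exact: divr_gt0.
exists u; rewrite -pvecB.
have -> : b * d - c * d * u = d * (b - c * u) by ring.
apply: (le_lt_trans (HM _)); rewrite pvecB.
have h1 : M * norm2 (pvec b - pvec (c * u)) <= M * (e / (M + 1)).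
  by apply: ler_wpM2l => //; exact: ltW.
apply: (le_lt_trans h1); rewrite mulrA ltr_pdivrMr //; nra.
Qed.

Lemma near_mults_trans x c c' :
  near_mults x c -> near_mults (pvec c) c' -> near_mults x c'.
Proof.
move=> H1 H2 e e0.
case: (H1 (e / 4)) => [|u Hu]; first by apply: divr_gt0 => //; lra.
case: (mul_bounded u) => M [M0 HM].
have M1 : 0 < M + 1 by lra.
case: (H2 (e / 4 / (M + 1))) => [|u' Hu'].
  by apply: divr_gt0 => //; apply: divr_gt0 => //; lra.
exists (u' * u).
have -> : x - pvec (c' * (u' * u)) = (x - pvec (c * u)) + pvec (u * (c - c' * u')).
  have -> : u * (c - c' * u') = c * u - c' * (u' * u) by ring.
  by rewrite pvecB addrA subrK.
apply: (le_lt_trans (norm2D_le _ _)).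
have h1 := HM (c - c' * u'); rewrite pvecB in h1.
have h2 : M * norm2 (pvec c - pvec (c' * u')) <= M * (e / 4 / (M + 1)).
  by apply: ler_wpM2l => //; exact: ltW.
have h3 : M * (e / 4 / (M + 1)) <= e / 4.
  rewrite mulrA ler_pdivrMr // mulrC ler_pM2l; [lra|exact: divr_gt0].
have := norm2_ge0 (pvec (u * (c - c' * u'))); lra.
Qed.

Lemma near_mults_const x (c : C) : c != 0 -> near_mults x c%:P.
Proof.
move=> c0 e e0; case: (@poly_dense x e%:C) => [|p [w [hw hlt]]]; first by rewrite ltcR.
exists (c^-1 *: p); rewrite mul_polyC scalerA mulfV // scale1r -(pvec_uniq hw).
by rewrite ipvv ltcR in hlt.
Qed.

(** Peeling at the first non-reproducible order j: write p = T_j p + (X - z)^j r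
    with r(z) = tau huge compared with ||p||, so that (X - z)^j a is within
    ||a (p - T_j p)|| / |tau| of a multiple of (X - z)^(j+1) a. *)
Lemma near_peel_first z j (a : {poly C}) : ~ repr z j ->
  (forall i, (i < j)%N -> repr z i) ->
  near_mults (pvec (('X - z%:P) ^+ j * a)) (('X - z%:P) ^+ j.+1 * a).
Proof.
move=> hn hrepr e e0.
case: (taylor_remainder_bound a hrepr) => K [K0 HK].
case: (taylor_coef_unbounded hn (K / e)) => p hp.
case: (taylor_split p z j) => r [hpe hr]; set tau := taylor_coef z p j in hp hr.
have N0 := norm2_ge0 (pvec p).
have tau_pos : 0 < abs2 tau.
  by apply: le_lt_trans hp; apply: mulr_ge0 => //; exact: divr_ge0 (ltW e0).
have tau0 : tau != 0 by apply/eqP => t0; rewrite t0 /abs2 mul0r ltxx in tau_pos.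
exists ((1 - tau^-1 *: r) %/ ('X - z%:P)).
rewrite -pvecB peel_identity // pvecZ norm2Z abs2V.
have -> : ('X - z%:P) ^+ j * r = p - taylor_poly z j p by rewrite {1}hpe addrAC subrr add0r.
rewrite mulrC ltr_pdivrMr //; apply: le_lt_trans (HK p) _.
by move: hp; rewrite mulrAC ltr_pdivrMr // [abs2 tau * e]mulrC.
Qed.

(** If z is not reproducible of order j, then (X - z)^j a is a limit of
    multiples of (X - z)^(j+1) a: peel at the least non-reproducible order l
    and multiply by (X - z)^(j - l). *)
Lemma near_peel z j (a : {poly C}) : ~ repr z j ->
  near_mults (pvec (('X - z%:P) ^+ j * a)) (('X - z%:P) ^+ j.+1 * a).
Proof.
move=> hn.
have ex : exists l, ~~ `[< repr z l >] by exists j; apply/asboolPn.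
case: (ex_minnP ex) => l /asboolPn hl hmin.
have hrepr : forall i, (i < l)%N -> repr z i.
  move=> i hi; apply/asboolP; apply/negPn/negP => h.
  by have := hmin i h; rewrite leqNgt hi.
have [m ->] : exists m, j = (l + m)%N.
  by exists (j - l)%N; rewrite subnKC //; apply: hmin; apply/asboolPn.
have := near_mults_mul (('X - z%:P) ^+ m) (near_peel_first a hl hrepr).
have -> : ('X - z%:P) ^+ l * a * ('X - z%:P) ^+ m = ('X - z%:P) ^+ (l + m) * a.
  by rewrite exprD; ring.
have -> : ('X - z%:P) ^+ l.+1 * a * ('X - z%:P) ^+ m = ('X - z%:P) ^+ (l + m).+1 * a.
  by rewrite -addSn exprD; ring.
done.
Qed.

Local Notation orbit g := [set iter n S (pvec g) | n in [set: nat]].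

Lemma mults_in_span g u : lspan (orbit g) (pvec (g * u)).
Proof.
exists [seq (u`_i, iter i S (pvec g)) | i <- index_iota 0 (size u)]; split.
  by move=> cv /mapP [i _ ->] /=; exists i.
rewrite big_map big_mkord /=.
under eq_bigr => i _ do rewrite /= pvec_iter.
rewrite -[in LHS](coefK u) poly_def mulr_sumr pvec_sum; apply: eq_bigr => i _.
by rewrite -scalerAr pvecZ mulrC.
Qed.

Lemma span_mults g y : lspan (orbit g) y -> exists u, y = pvec (g * u).
Proof.
case=> s [Hs ->]; elim: s Hs => [|cv s IH] Hs.
  by exists 0; rewrite big_nil mulr0 pvec0.
case: IH => [cv' h|u hu]; first by apply: Hs; rewrite in_cons h orbT.
have [n _ hn] := Hs cv (mem_head _ _).
exists (cv.1 *: 'X^n + u); rewrite big_cons hu -hn pvec_iter mulrDr pvecD.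
by rewrite -scalerAr pvecZ mulrC.
Qed.

Lemma near_mults_cyc x g : near_mults x g -> cyc ip S (pvec g) x.
Proof.
move=> H e e0; case: (Cpos_Re e0) => r0 er.
case: (H _ r0) => u hu; exists (pvec (g * u)); split; first exact: mults_in_span.
by rewrite ipvv er ltcR.
Qed.

Lemma orth_lspan x (A : set V) : (forall y, A y -> ip x y = 0) -> orth ip (lspan A) x.
Proof.
move=> H y [s [Hs ->]]; elim: s Hs => [|cv s IH] Hs; first by rewrite big_nil ip0r.
rewrite big_cons ipDr ipZr H ?IH ?mulr0 ?addr0 //; last exact/Hs/mem_head.
by move=> cv' h; apply: Hs; rewrite in_cons h orbT.
Qed.

Lemma in_lspan (A : set V) y : A y -> lspan A y.
Proof.
move=> h; exists [:: (1, y)]; split; last by rewrite big_cons big_nil scale1r addr0.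
by move=> cv; rewrite inE => /eqP ->.
Qed.

(** * Reproducing kernels and the description of [g] *)
Section Kernels.
Variable k : C -> nat -> V.
Hypothesis k_kernel : forall beta m, repr beta m -> is_kernel Om ip ev beta m (k beta m).

Lemma ip_kernel_XsubCX z j l (b : {poly C}) : repr z l ->
  ip (pvec (('X - z%:P) ^+ j * b)) (k z l) =
  if (l < j)%N then 0 else taylor_coef z b (l - j) *+ l`!.
Proof.
move=> hr; rewrite (k_kernel hr (pvecP _)) derivn_taylor_coef taylor_coef_XsubCX.
by case: ifP => // _; rewrite mul0rn.
Qed.

(** Elements of [g] are orthogonal to the kernels k_z^(l), l < mult_z g, since
    these vanish on the multiples of g and are continuous. *)
Lemma cyc_orth_kernel x g z l : cyc ip S (pvec g) x -> g != 0 -> repr z l ->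
  (l < mup z g)%N -> ip x (k z l) = 0.
Proof.
move=> H g0 hr hl.
have mult_orth u : ip (pvec (g * u)) (k z l) = 0.
  case: (mup_split z g0) => a [ga _].
  by rewrite ga -mulrA ip_kernel_XsubCX // hl.
set K := norm2 (k z l); set a := abs2 (ip x (k z l)).
have K0 : 0 <= K by exact: norm2_ge0.
have small : forall eps : R, 0 < eps -> a <= eps * K.
  move=> eps eps0; case: (H eps%:C) => [|y [hly hy]]; first by rewrite ltcR.
  case: (span_mults hly) => u yu; rewrite {y hly}yu in hy.
  apply: (le_trans (orth_dist_bound _ (mult_orth u))).
  apply: ler_wpM2r => //; by move: hy; rewrite ipvv ltcR => /ltW.
have a0 : a = 0.
  apply/eqP; rewrite eq_le abs2_ge0 andbT; apply/negP => /negP; rewrite -ltNge => apos.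
  have K1 : 0 < K + 1 by lra.
  have := small (a / (K + 1)) (divr_gt0 apos K1).
  rewrite mulrC mulrA ler_pdivlMr // => h; nra.
exact: abs2_eq0.
Qed.

(** Extending an approximated divisor d by a factor X - z, when z is
    reproducible of order j = mult_z d: if x ⊥ k_z^(j) and x ~ d u, then u(z) is small
    (it is read off by k_z^(j)), and x ~ d u - u(z) d, a multiple of d (X - z). *)
Lemma near_mults_reproducible_root x d z : d != 0 -> repr z (mup z d) ->
  ip x (k z (mup z d)) = 0 -> near_mults x d -> near_mults x (d * ('X - z%:P)).
Proof.
move=> d0 hr hx H e e0.
case: (mup_split z d0) => a [da az].
move: hr hx da; set j := mup z d => hr hx da.
set K := norm2 (k z j); set D := norm2 (pvec d); set A := abs2 (a.[z] *+ j`!).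
have K0 : 0 <= K by exact: norm2_ge0.
have D0 : 0 <= D by exact: norm2_ge0.
have A0 : 0 < A.
  rewrite /A abs2_mulrn; apply: mulr_gt0; first exact: abs2_gt0.
  by apply: exprn_gt0; rewrite ltr0n fact_gt0.
have value_bound u : abs2 u.[z] * A <= norm2 (x - pvec (d * u)) * K.
  have hip : ip (pvec (d * u)) (k z j) = u.[z] * (a.[z] *+ j`!).
    rewrite da -mulrA ip_kernel_XsubCX // ltnn subnn taylor_coef0 hornerM.
    by rewrite mulrnAr mulrC.
  by rewrite -abs2M -hip norm2B; exact: orth_dist_bound.
set t := K * D / A.
have t0 : 0 <= t by apply: divr_ge0 => //; [exact: mulr_ge0|exact: ltW].
set dl := e / (3 + 2 * t).
have dl0 : 0 < dl by apply: divr_gt0 => //; lra.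
have edl : dl * (3 + 2 * t) = e by rewrite /dl mulfVK // gt_eqF //; lra.
case: (H dl dl0) => u Hu.
exists ((u - (u.[z])%:P) %/ ('X - z%:P)); rewrite mul_root_quotient.
set c := u.[z] in value_bound *.
have -> : x - pvec (d * u - c *: d) = (x - pvec (d * u)) + c *: pvec d.
  by rewrite pvecB pvecZ opprB addrCA addrC.
apply: (le_lt_trans (norm2D_le _ _)); rewrite norm2Z -/D.
have h1 : abs2 c * A <= dl * K.
  by apply: (le_trans (value_bound u)); apply: ler_wpM2r => //; exact: ltW.
have h2 : abs2 c * D <= dl * t.
  by rewrite /t mulrA mulrA ler_pdivlMr //; have := abs2_ge0 c; nra.
have := norm2_ge0 (x - pvec (d * u)); nra.
Qed.

Definition kernels_of (g : {poly C}) : set V :=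
  [set y | exists z l, [/\ repr z l, (l < mup z g)%N & y = k z l]].

Lemma cyc_poly_orth (g : {poly C}) : g != 0 ->
  cyc ip S (pvec g) = orth ip (lspan (kernels_of g)).
Proof.
move=> g0; apply/seteqP; split => x hx.
  by apply: orth_lspan => y [z [l [hr hl ->]]]; exact: cyc_orth_kernel hx g0 hr hl.
have hxk z l : repr z l -> (l < mup z g)%N -> ip x (k z l) = 0.
  by move=> hr hl; apply: hx; apply: in_lspan; exists z, l.
apply: near_mults_cyc.
suff : forall n (d : {poly C}), (size d <= n)%N -> d %| g -> near_mults x d by apply.
elim => [|n IH] d hs hd.
  by move: hs; rewrite leqn0 size_poly_eq0 => /eqP d0; move: hd g0; rewrite d0 dvd0p => ->.
have d0 : d != 0 by apply: contraTneq hd => ->; rewrite dvd0p.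
have [/size1_polyC dc|] := leqP (size d) 1.
  by rewrite dc; apply: near_mults_const; rewrite -polyC_eq0 -dc.
move=> h1; have /closed_rootP [z rz] : size d != 1 by rewrite gt_eqF.
have [d' dd'] : exists d', d = d' * ('X - z%:P).
  by exists (d %/ ('X - z%:P)); rewrite divpK // dvdp_XsubCl.
have d'0 : d' != 0 by apply: contra_neq d0; rewrite dd' => ->; rewrite mul0r.
have hs' : (size d' <= n)%N.
  by move: hs; rewrite dd' size_mul ?polyXsubC_eq0 // size_XsubC addn2.
have hd' : d' %| g by apply: dvdp_trans hd; rewrite dd' dvdp_mulr.
have hmup : (mup z d' < mup z g)%N.
  rewrite mup_geq //; apply: dvdp_trans hd; rewrite dd' exprSr.
  by apply: dvdp_mul => //; rewrite -mup_geq.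
rewrite dd'; case: (pselect (repr z (mup z d'))) => hr.
  exact: near_mults_reproducible_root d'0 hr (hxk _ _ hr hmup) (IH d' hs' hd').
apply: (near_mults_trans (IH d' hs' hd')).
case: (mup_split z d'0) => a [da _]; rewrite [in pvec _]da.
have -> : d' * ('X - z%:P) = ('X - z%:P) ^+ (mup z d').+1 * a.
  by rewrite [in LHS]da -mulrA (mulrC a) mulrA -exprSr.
exact: near_peel.
Qed.

Lemma rmult_gt (f : {poly C}) b l :
  (l < rmult Om ip ev f b)%N <-> repr b l /\ (l < mup b f)%N.
Proof.
rewrite /rmult; case: (pselect (repr b 0)) => h0.
  rewrite (asboolT h0) card_asbool lt_count_downward.
    split=> -[h1 h2]; split => //; first by apply/ro_geE; exact/asboolP.
    by apply/asboolP/ro_geE.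
  move=> a c hac /asboolP [j [hj hr]]; apply/asboolP; exists j.
  by split => //; exact: leq_trans hac hj.
rewrite (asboolF h0) ltn0; split => // -[hr _].
by exfalso; apply: h0; exact: repr_le hr (leq0n l).
Qed.

(** Theorem 7 for the vectors pvec f and pvec q, q = prod_b (X - b)^(r_b):
    K(f) and K(q) are both the set of kernels of the statement. *)
Lemma cyc_reproducible_zeros (f : {poly C}) (s : seq C) : f != 0 -> uniq s ->
  (forall b, b \in s <-> (0 < rmult Om ip ev f b)%N) ->
  let q := \prod_(b <- s) ('X - b%:P) ^+ rmult Om ip ev f b in
  let Ks := [set x | exists beta l,
                 [/\ beta \in s, (l < rmult Om ip ev f beta)%N & x = k beta l]] in
  cyc ip S (pvec f) = cyc ip S (pvec q) /\ cyc ip S (pvec f) = orth ip (lspan Ks).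
Proof.
move=> f0 us hs q Ks.
have Kf : kernels_of f = Ks.
  apply/seteqP; split => y /=.
    case=> z [l [hr hl ->]]; have hlt : (l < rmult Om ip ev f z)%N by apply/rmult_gt.
    by exists z, l; split => //; apply/hs; exact: leq_ltn_trans (leq0n l) hlt.
  by case=> b [l [hb /rmult_gt[hr hl] ->]]; exists b, l.
have Kq : kernels_of q = Ks.
  apply/seteqP; split => y /=.
    case=> z [l [hr +  ->]]; rewrite mup_prod_XsubCX //.
    by case: ifP => hz hl; [exists z, l|rewrite ltn0 in hl].
  case=> b [l [hb hl ->]]; exists b, l; split => //; first by case/rmult_gt: hl.
  by rewrite mup_prod_XsubCX // hb.
by rewrite !cyc_poly_orth ?prod_XsubCX_neq0 // Kf Kq.
Qed.

End Kernels.
End FunctionSpace.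
End InnerProduct.

Theorem mainTheorem7 (R : realType) (Om : set (R[i])^o) (V : lmodType R[i])
    (ip : V -> V -> R[i]) (ev : V -> R[i] -> R[i]) (S : V -> V)
    (k : R[i] -> nat -> V) (f : {poly R[i]}) (s : seq R[i]) (vf vq : V) :
  standing_assumptions Om ip ev S ->
  (* k beta m = k_beta^(m) whenever beta is reproducible of order m *)
  (forall beta m, reproducible Om ip ev beta m -> is_kernel Om ip ev beta m (k beta m)) ->
  f != 0 ->
  (* s lists the distinct points beta_1, ..., beta_n of R(f); r_j = rmult f beta_j >= 1 *)
  uniq s ->
  (forall beta, beta \in s <-> (0 < rmult Om ip ev f beta)%N) ->
  (* vf is f, vq is prod_{beta in R(f)} (z - beta), as elements of H *)
  is_poly_elt ev Om vf f ->
  is_poly_elt ev Om vq (\prod_(beta <- s) ('X - beta%:P) ^+ rmult Om ip ev f beta) ->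
  cyc ip S vf = cyc ip S vq /\
  cyc ip S vf = orth ip (lspan [set x | exists beta l,
                 [/\ beta \in s, (l < rmult Om ip ev f beta)%N & x = k beta l]]).
Proof.
case=> _ [ipL [ipC [ip_ge0 [ip_eq0 [_ [evL [ev_inj [_ [_ [S_elt [S_bnd [poly_ex dense]]]]]]]]]]]].
move=> k_kernel f0 us hs hvf hvq.
rewrite (pvec_uniq ev_inj poly_ex hvf) (pvec_uniq ev_inj poly_ex hvq).
exact: (cyc_reproducible_zeros ipL ipC ip_ge0 ip_eq0 evL ev_inj S_elt S_bnd poly_ex
  dense k_kernel f0 us hs).
Qed.
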